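(* Let $\alpha\in(0,1)$ and let $0=t_0<t_1<t_2<\cdots$ be time levels with $\tau_k=t_k-t_{k-1}$, $r_k:=\tau_k/\tau_{k-1}$ ($k\ge2$), such that $r_k<r^*(\alpha)$ for all $k\ge2$. For a real sequence $(v^k)_{k\ge0}$ and $n\ge2$ set $$J^n_{B2}:=\Big(\frac{1}{2-\alpha}a^{(n)}_0+\frac{r_n\eta^{(n)}_0}{1+r_n}\Big)\nabla_\tau v^n-\frac{r_n^2\eta^{(n)}_0}{1+r_n}\nabla_\tau v^{n-1}.$$ Then for $n\ge2$, $$(\nabla_\tau v^n)J^n_{B2}\ge\frac{\alpha r_{n+1}^{2-\alpha/2}}{2(1+r_{n+1})\tau_n^\alpha}\frac{(\nabla_\tau v^n)^2}{\Gamma(3-\alpha)}-\frac{\alpha r_n^{2-\alpha/2}}{2(1+r_n)\tau_{n-1}^\alpha}\frac{(\nabla_\tau v^{n-1})^2}{\Gamma(3-\alpha)}+\frac{\mathrm{g}(r_n,r_{n+1},\alpha)}{2\Gamma(3-\alpha)\tau_n^\alpha}(\nabla_\tau v^n)^2.$$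
   Context: $\nabla_\tau v^k:=v^k-v^{k-1}$; $\omega_\beta(t):=t^{\beta-1}/\Gamma(\beta)$; $a^{(n)}_0:=\frac1{\tau_n}\int_{t_{n-1}}^{t_n}\omega_{1-\alpha}(t_n-s)\,ds$ and $\eta^{(n)}_0:=\frac{2}{\tau_n}\int_{t_{n-1}}^{t_n}\frac{s-t_{n-1/2}}{\tau_n}\omega_{1-\alpha}(t_n-s)\,ds$ with $t_{n-1/2}=(t_n+t_{n-1})/2$. $\mathrm{g}(x,y,\alpha):=\frac{2+2(1+\alpha)x-\alpha x^{2-\alpha/2}}{1+x}-\frac{\alpha y^{2-\alpha/2}}{1+y}$; $r^*(\alpha)$ is the unique positive root $z$ of $1/\alpha+(1+1/\alpha)z-z^{2-\alpha/2}=0$. *)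

From Stdlib Require Import Reals ClassicalEpsilon.
From Coquelicot Require Import Coquelicot.
Open Scope R_scope.

Definition Gamma (x : R) : R :=
  RInt_gen (fun t => Rpower t (x - 1) * exp (- t)) (at_right 0) (Rbar_locally p_infty).

Definition omega (beta t : R) : R := Rpower t (beta - 1) / Gamma beta.

Definition nabla (v : nat -> R) (k : nat) : R := v k - v (k - 1)%nat.

Definition tau (t : nat -> R) (k : nat) : R := t k - t (k - 1)%nat.
Definition ratio (t : nat -> R) (k : nat) : R := tau t k / tau t (k - 1)%nat.

Definition a0 (alpha : R) (t : nat -> R) (n : nat) : R :=
  / tau t n * RInt_gen (fun s => omega (1 - alpha) (t n - s))
                (at_point (t (n - 1)%nat)) (at_left (t n)).

Definition eta0 (alpha : R) (t : nat -> R) (n : nat) : R :=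
  2 / tau t n * RInt_gen
    (fun s => (s - (t n + t (n - 1)%nat) / 2) / tau t n * omega (1 - alpha) (t n - s))
    (at_point (t (n - 1)%nat)) (at_left (t n)).

Definition gfun (x y alpha : R) : R :=
  (2 + 2 * (1 + alpha) * x - alpha * Rpower x (2 - alpha / 2)) / (1 + x)
  - alpha * Rpower y (2 - alpha / 2) / (1 + y).

Definition is_rstar (alpha z : R) : Prop :=
  0 < z /\ 1 / alpha + (1 + 1 / alpha) * z - Rpower z (2 - alpha / 2) = 0.
Definition rstar (alpha : R) : R := epsilon (inhabits 0) (is_rstar alpha).

Definition JB2 (alpha : R) (t : nat -> R) (v : nat -> R) (n : nat) : R :=
  (1 / (2 - alpha) * a0 alpha t n
     + ratio t n * eta0 alpha t n / (1 + ratio t n)) * nabla v n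
  - (ratio t n) ^ 2 * eta0 alpha t n / (1 + ratio t n) * nabla v (n - 1)%nat.

From Stdlib Require Import Reals Lra Psatz Classical Lia.
From Coquelicot Require Import Coquelicot.
Open Scope R_scope.

(* With Gamma(3 - alpha) = (1 - alpha) (2 - alpha) Gamma(1 - alpha), integrating the power
   (t_n - s)^(-alpha) and its first moment exactly gives the closed forms
   a_0 = (2 - alpha) / (Gamma(3 - alpha) tau_n^alpha) and eta_0 = alpha / (Gamma(3 - alpha) tau_n^alpha).
   Put rho = r_n^(alpha/2), so that tau_(n-1)^alpha = tau_n^alpha / rho^2 and
   r_n^(2 - alpha/2) = r_n^2 / rho.  The r_(n+1) terms then cancel, and the difference of the two
   sides is alpha r_n^2 (nabla v^n - rho nabla v^(n-1))^2 / (2 (1 + r_n) rho Gamma(3 - alpha) tau_n^alpha). *)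

Lemma Rpower_pos (x y : R) : 0 < Rpower x y.
Proof. apply exp_pos. Qed.

Lemma Rpower_1_minus (x a : R) : 0 < x -> Rpower x (1 - a) = x / Rpower x a.
Proof. intros Hx. unfold Rminus. rewrite Rpower_plus, Rpower_1, Rpower_Ropp by exact Hx. reflexivity. Qed.

Lemma Rpower_2_minus (x a : R) : 0 < x -> Rpower x (2 - a) = x ^ 2 / Rpower x a.
Proof.
  intros Hx. replace (2 - a) with (1 + (1 - a)) by ring.
  rewrite Rpower_plus, Rpower_1_minus, Rpower_1 by exact Hx. field. apply Rgt_not_eq, Rpower_pos.
Qed.

Lemma Rpower_half_sqr (x a : R) : Rpower x a = Rpower x (a / 2) ^ 2.
Proof. simpl. rewrite Rmult_1_r, <- Rpower_plus. f_equal. field. Qed.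

Lemma Rpower_div (x y a : R) : 0 < x -> 0 < y -> Rpower (x / y) a = Rpower x a / Rpower y a.
Proof.
  intros Hx Hy. unfold Rdiv. rewrite <- Rpower_mult_distr, <- Rpower_Ropp
    by (try apply Rinv_0_lt_compat; assumption).
  unfold Rpower. rewrite ln_Rinv by exact Hy. do 2 f_equal. ring.
Qed.

Lemma is_derive_Rpower (x y : R) : 0 < x ->
  is_derive (fun x => Rpower x y) x (y * Rpower x (y - 1)).
Proof. intros Hx. apply is_derive_Reals. now apply derivable_pt_lim_power. Qed.

Lemma ex_derive_Rpower (x y : R) : 0 < x -> ex_derive (fun x => Rpower x y) x.
Proof. intros Hx. eexists. now apply is_derive_Rpower. Qed.

Lemma Derive_Rpower (x y : R) : 0 < x ->
  Derive (fun x => Rpower x y) x = y * Rpower x (y - 1).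
Proof. intros Hx. apply is_derive_unique. now apply is_derive_Rpower. Qed.

Ltac solve_ex_derive_Rpower := repeat first [exact I | split | apply ex_derive_Rpower; lra].

Section Limits_0.
Context {T : Type} {F : (T -> Prop) -> Prop} {FF : Filter F}.

Lemma filterlim_mult_l_0 (A : R) (g : T -> R) :
  filterlim g F (locally 0) -> filterlim (fun x => A * g x) F (locally 0).
Proof.
  intros Hg. rewrite <- (Rmult_0_r A).
  exact (filterlim_comp _ _ _ g (fun z => scal A z) _ _ _ Hg
           (filterlim_scal_r (V := R_NormedModule) A 0)).
Qed.

Lemma filterlim_plus_0 (g h : T -> R) :
  filterlim g F (locally 0) -> filterlim h F (locally 0) ->
  filterlim (fun x => g x + h x) F (locally 0).
Proof.
  intros Hg Hh. rewrite <- (Rplus_0_r 0).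
  exact (filterlim_comp_2 _ _ (fun u v => plus u v) Hg Hh
           (filterlim_plus (V := R_NormedModule) 0 0)).
Qed.

End Limits_0.

Lemma filterlim_Rpower_at_right_0 (p : R) : 0 < p ->
  filterlim (fun x => Rpower x p) (at_right 0) (locally 0).
Proof.
  intros Hp. apply filterlim_locally. intros eps.
  exists (mkposreal (Rpower eps (/ p)) (Rpower_pos _ _)). intros x Hx Hx0.
  change (Rabs (x - 0) < Rpower eps (/ p)) in Hx. change (Rabs (Rpower x p - 0) < eps).
  rewrite Rminus_0_r, Rabs_pos_eq in * by (try apply Rlt_le, Rpower_pos; lra).
  replace (pos eps) with (Rpower (Rpower eps (/ p)) p).
  - apply Rlt_Rpower_l; lra.
  - rewrite Rpower_mult, Rinv_l, Rpower_1 by (try apply cond_pos; lra). reflexivity.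
Qed.

Lemma filterlim_Rpower_at_left (c p : R) : 0 < p ->
  filterlim (fun s => Rpower (c - s) p) (at_left c) (locally 0).
Proof.
  intros Hp.
  apply (filterlim_comp _ _ _ (fun s => c - s) (fun x => Rpower x p) _ (at_right 0));
    [| exact (filterlim_Rpower_at_right_0 p Hp)].
  intros P [d Hd]. exists d. intros s Hs Hsc. apply Hd; [| lra].
  change (Rabs (c - s - 0) < d). change (Rabs (s - c) < d) in Hs.
  rewrite Rminus_0_r, Rabs_minus_sym. exact Hs.
Qed.

Lemma Rpower_mul_exp_le (s t : R) : 0 < s -> 0 < t ->
  Rpower t s * exp (- t) <= Rpower s s * exp (- s).
Proof.
  intros Hs Ht. unfold Rpower. rewrite <- !exp_plus.
  assert (Hln : ln (t / s) <= t / s - 1).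
  { pose proof (exp_ineq1_le (ln (t / s))) as H.
    rewrite exp_ln in H by (apply Rdiv_lt_0_compat; lra). lra. }
  unfold Rdiv in Hln. rewrite ln_mult, ln_Rinv in Hln by (try apply Rinv_0_lt_compat; lra).
  apply Rmult_le_compat_l with (r := s) in Hln; [| lra].
  replace (s * (t * / s - 1)) with (t - s) in Hln by (field; lra).
  destruct (Rle_lt_or_eq_dec (s * ln t + - t) (s * ln s + - s)) as [H | H]; [lra | |].
  - left. now apply exp_increasing.
  - right. now rewrite H.
Qed.

Lemma is_lim_div_p_infty (C : R) : is_lim (fun t => C / t) p_infty 0.
Proof.
  replace (Finite 0) with (Rbar_mult C (Rbar_inv p_infty)) by (simpl; f_equal; ring).
  apply is_lim_scal_l, is_lim_inv; [apply is_lim_id | discriminate].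
Qed.

Lemma filterlim_Rpower_exp_at_right_0 (s : R) : 0 < s ->
  filterlim (fun t => Rpower t s * exp (- t)) (at_right 0) (locally 0).
Proof.
  intros Hs. apply (filterlim_le_le (fun _ => 0) _ (fun t => Rpower t s) 0).
  - exists (mkposreal 1 Rlt_0_1). intros t _ Ht.
    assert (exp (- t) < 1) by (rewrite <- exp_0; apply exp_increasing; lra).
    pose proof (Rpower_pos t s). pose proof (exp_pos (- t)). nra.
  - apply filterlim_const.
  - exact (filterlim_Rpower_at_right_0 s Hs).
Qed.

Lemma filterlim_Rpower_exp_p_infty (s : R) : 0 < s ->
  filterlim (fun t => Rpower t s * exp (- t)) (Rbar_locally p_infty) (locally 0).
Proof.
  intros Hs.
  apply (filterlim_le_le (fun _ => 0) _
           (fun t => Rpower (s + 1) (s + 1) * exp (- (s + 1)) / t) 0).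
  - exists 0. intros t Ht.
    pose proof (Rpower_pos t s). pose proof (exp_pos (- t)).
    pose proof (Rpower_mul_exp_le (s + 1) t ltac:(lra) ltac:(lra)) as Hle.
    rewrite Rpower_plus, Rpower_1 in Hle by lra.
    split; [nra |]. apply Rmult_le_reg_l with t; [lra |].
    replace (t * (Rpower (s + 1) (s + 1) * exp (- (s + 1)) / t))
      with (Rpower (s + 1) (s + 1) * exp (- (s + 1))) by (field; lra).
    nra.
  - apply filterlim_const.
  - apply is_lim_div_p_infty.
Qed.

Lemma is_RInt_gen_antiderivative {Fa Fb : (R -> Prop) -> Prop} {FFa : Filter Fa} {FFb : Filter Fb}
  (f F : R -> R) (la lb : R) :
  filter_prod Fa Fb (fun ab => is_RInt f (fst ab) (snd ab) (F (snd ab) - F (fst ab))) ->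
  filterlim F Fa (locally la) -> filterlim F Fb (locally lb) ->
  is_RInt_gen f Fa Fb (lb - la).
Proof.
  intros HF Ha Hb. eapply filterlimi_lim_ext_loc; [exact HF |].
  apply (filterlim_comp_2 (G := locally lb) (H := locally (opp la))
           (fun ab => F (snd ab)) (fun ab => opp (F (fst ab))) (fun x y => plus x y)).
  - exact (filterlim_comp _ _ _ snd F _ _ _ filterlim_snd Hb).
  - apply (filterlim_comp _ _ _ fst (fun a => opp (F a)) _ _ _ filterlim_fst).
    exact (filterlim_comp _ _ _ F opp _ _ _ Ha (filterlim_opp (V := R_NormedModule) la)).
  - exact (filterlim_plus (V := R_NormedModule) lb (opp la)).
Qed.

Lemma is_RInt_gen_ext_R {Fa Fb : (R -> Prop) -> Prop} {FFa : Filter Fa} {FFb : Filter Fb}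
  (f g : R -> R) (l : R) :
  (forall x, f x = g x) -> is_RInt_gen f Fa Fb l -> is_RInt_gen g Fa Fb l.
Proof.
  intros Hfg H. eapply is_RInt_gen_ext; [| exact H].
  apply filter_forall. intros ab x _. apply Hfg.
Qed.

Lemma is_RInt_gen_div_r {Fa Fb : (R -> Prop) -> Prop} {FFa : Filter Fa} {FFb : Filter Fb}
  (f : R -> R) (k l : R) :
  is_RInt_gen f Fa Fb l -> is_RInt_gen (fun x => f x / k) Fa Fb (l / k).
Proof.
  intros H. replace (l / k) with (/ k * l) by (unfold Rdiv; ring).
  apply (is_RInt_gen_ext_R (fun x => scal (/ k) (f x))); [| exact (is_RInt_gen_scal _ (/ k) _ H)].
  intros x. change (/ k * f x = f x / k). unfold Rdiv. ring.
Qed.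

Lemma is_RInt_gen_at_left_antiderivative (f F : R -> R) (a c : R) : a < c ->
  (forall x, x < c -> is_derive F x (f x)) -> (forall x, x < c -> continuous f x) ->
  filterlim F (at_left c) (locally 0) ->
  is_RInt_gen f (at_point a) (at_left c) (- F a).
Proof.
  intros Hac Hd Hc HF. rewrite <- Rminus_0_l.
  apply (is_RInt_gen_antiderivative f F); [| intros P HP; exact (locally_singleton _ P HP) | exact HF].
  apply Filter_prod with (fun x => x < c) (fun x => x < c);
    [exact Hac | exists (mkposreal 1 Rlt_0_1); auto |].
  intros x y Hx Hy. apply (is_RInt_derive F f); intros z Hz;
    [apply Hd | apply Hc]; apply Rle_lt_trans with (Rmax x y); solve [apply Hz | now apply Rmax_lub_lt].
Qed.

Lemma is_RInt_gen_nonneg_bounded (f : R -> R) (M : R) :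
  (forall x, 0 < x -> 0 <= f x) ->
  (forall a b, 0 < a -> 0 < b -> ex_RInt f a b) ->
  (forall a b, 0 < a -> a <= b -> RInt f a b <= M) ->
  exists L, is_RInt_gen f (at_right 0) (Rbar_locally p_infty) L /\
    forall a b, 0 < a -> a <= b -> RInt f a b <= L.
Proof.
  intros Hpos Hex HM.
  set (E := fun y => exists a b, 0 < a /\ a <= b /\ y = RInt f a b).
  destruct (completeness E) as [L [Hub Hlub]].
  { exists M. intros y (a & b & Ha & Hab & ->). auto. }
  { exists (RInt f 1 1), 1, 1. repeat split; lra. }
  assert (HL : forall a b, 0 < a -> a <= b -> RInt f a b <= L).
  { intros a b Ha Hab. apply Hub. now exists a, b. }
  exists L. split; [| exact HL].
  apply filterlimi_lim_ext_loc with (f := fun ab => RInt f (fst ab) (snd ab)).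
  { apply Filter_prod with (fun a => 0 < a) (fun b => 0 < b);
      [exists (mkposreal 1 Rlt_0_1); auto | exists 0; auto |].
    intros a b Ha Hb. apply (RInt_correct (V := R_CompleteNormedModule)), Hex; assumption. }
  apply filterlim_locally. intros eps.
  assert (Hnear : exists a0 b0, 0 < a0 /\ a0 <= b0 /\ L - eps < RInt f a0 b0).
  { apply NNPP. intros Hn.
    assert (L <= L - eps); [| pose proof (cond_pos eps); lra].
    apply Hlub. intros y (a & b & Ha & Hab & ->). apply Rnot_lt_le. intros Hlt. apply Hn. eauto. }
  destruct Hnear as (a0 & b0 & Ha0 & Hab0 & Hnear).
  apply Filter_prod with (fun a => 0 < a < a0) (fun b => b0 < b).
  - exists (mkposreal a0 Ha0). intros y Hy Hy0. change (Rabs (y - 0) < a0) in Hy.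
    apply Rabs_lt_between in Hy. lra.
  - now exists b0.
  - intros a b Ha Hb. change (Rabs (RInt f a b - L) < eps). simpl.
    assert (Hsplit : RInt f a b = RInt f a a0 + RInt f a0 b0 + RInt f b0 b).
    { rewrite <- (RInt_Chasles f a a0 b), <- (RInt_Chasles f a0 b0 b) by (apply Hex; lra).
      unfold plus; simpl. ring. }
    assert (0 <= RInt f a a0) by (apply RInt_ge_0; [lra | apply Hex; lra | intros; apply Hpos; lra]).
    assert (0 <= RInt f b0 b) by (apply RInt_ge_0; [lra | apply Hex; lra | intros; apply Hpos; lra]).
    pose proof (HL a b (proj1 Ha) ltac:(lra)).
    apply Rabs_lt_between. pose proof (cond_pos eps). lra.
Qed.

Lemma continuous_Rpower_exp (c x : R) : 0 < x ->
  continuous (fun t => Rpower t c * exp (- t)) x.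
Proof.
  intros Hx. apply (ex_derive_continuous (V := R_NormedModule)).
  auto_derive. solve_ex_derive_Rpower.
Qed.

Lemma ex_RInt_Rpower_exp (c a b : R) : 0 < a -> 0 < b ->
  ex_RInt (fun t => Rpower t c * exp (- t)) a b.
Proof.
  intros Ha Hb. apply (ex_RInt_continuous (V := R_CompleteNormedModule)).
  intros z Hz. apply continuous_Rpower_exp.
  apply Rlt_le_trans with (Rmin a b); [now apply Rmin_glb_lt | apply Hz].
Qed.

Lemma exp_neg_mul_1_plus_le (x : R) : exp (- x) * (1 + x) <= 1.
Proof.
  pose proof (exp_ineq1_le x). pose proof (exp_pos (- x)).
  assert (exp (- x) * exp x = 1) by (rewrite <- exp_plus, Rplus_opp_l; apply exp_0).
  nra.
Qed.

Lemma Rpower_le_1_plus (t p : R) : 0 < t -> 0 <= p <= 1 -> Rpower t p <= 1 + t.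
Proof.
  intros Ht Hp. destruct (Rle_dec t 1) as [H | H].
  - apply Rle_trans with (Rpower 1 p); [apply Rle_Rpower_l; lra |].
    unfold Rpower. rewrite ln_1, Rmult_0_r, exp_0. lra.
  - apply Rle_trans with (Rpower t 1); [apply Rle_Rpower; lra |]. rewrite Rpower_1; lra.
Qed.

(* The integrand is dominated by the derivative of
   [K t = (t^s e^-t - (2 + t) e^-t) / s], and [K b - K a <= 2 / s]. *)
Lemma RInt_Gamma_integrand_le (s a b : R) : 0 < s <= 1 -> 0 < a <= b ->
  RInt (fun t => Rpower t (s - 1) * exp (- t)) a b <= 2 / s.
Proof.
  intros Hs Hab.
  set (K := fun t => (Rpower t s * exp (- t) - (2 + t) * exp (- t)) / s).
  set (k := fun t => Rpower t (s - 1) * exp (- t) + ((1 + t) - Rpower t s) * exp (- t) / s).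
  assert (HK : is_RInt k a b (K b - K a)).
  { apply (is_RInt_derive K k); intros x Hx; rewrite Rmin_left, Rmax_right in Hx by lra.
    - unfold K, k. auto_derive; [solve_ex_derive_Rpower |].
      rewrite Derive_Rpower by lra. field. lra.
    - apply (ex_derive_continuous (V := R_NormedModule)). unfold k.
      auto_derive. solve_ex_derive_Rpower. }
  apply Rle_trans with (RInt k a b).
  - apply RInt_le; [lra | apply ex_RInt_Rpower_exp; lra | eexists; exact HK |].
    intros x Hx. unfold k.
    pose proof (Rpower_le_1_plus x s ltac:(lra) ltac:(lra)). pose proof (exp_pos (- x)).
    assert (0 <= ((1 + x) - Rpower x s) * exp (- x) / s)
      by (apply Rmult_le_pos; [nra | apply Rlt_le, Rinv_0_lt_compat; lra]).
    lra.
  - rewrite (is_RInt_unique k a b _ HK).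
    pose proof (Rpower_le_1_plus b s ltac:(lra) ltac:(lra)).
    pose proof (exp_neg_mul_1_plus_le a). pose proof (exp_pos (- a)). pose proof (exp_pos (- b)).
    pose proof (Rpower_pos a s).
    replace (K b - K a) with ((Rpower b s * exp (- b) - (2 + b) * exp (- b)
                               - (Rpower a s * exp (- a) - (2 + a) * exp (- a))) / s)
      by (unfold K; field; lra).
    apply Rmult_le_compat_r; [apply Rlt_le, Rinv_0_lt_compat; lra | nra].
Qed.

Lemma ex_Gamma_integral_pos (s : R) : 0 < s <= 1 ->
  exists L, is_RInt_gen (fun t => Rpower t (s - 1) * exp (- t))
              (at_right 0) (Rbar_locally p_infty) L /\ 0 < L.
Proof.
  intros Hs.
  assert (Hpos : forall x, 0 < x -> 0 < Rpower x (s - 1) * exp (- x))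
    by (intros x _; apply Rmult_lt_0_compat; [apply Rpower_pos | apply exp_pos]).
  destruct (is_RInt_gen_nonneg_bounded (fun t => Rpower t (s - 1) * exp (- t)) (2 / s))
    as [L [HL HLb]].
  - intros x Hx. now apply Rlt_le, Hpos.
  - intros a b Ha Hb. now apply ex_RInt_Rpower_exp.
  - intros a b Ha Hab. apply RInt_Gamma_integrand_le; lra.
  - exists L. split; [exact HL |].
    apply Rlt_le_trans with (RInt (fun t => Rpower t (s - 1) * exp (- t)) 1 2); [| apply HLb; lra].
    apply RInt_gt_0; [lra | intros x Hx; apply Hpos; lra | intros x Hx; apply continuous_Rpower_exp; lra].
Qed.

Lemma is_RInt_gen_Gamma_succ (s L : R) : 0 < s ->
  is_RInt_gen (fun t => Rpower t (s - 1) * exp (- t)) (at_right 0) (Rbar_locally p_infty) L ->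
  is_RInt_gen (fun t => Rpower t (s + 1 - 1) * exp (- t)) (at_right 0) (Rbar_locally p_infty)
    (s * L).
Proof.
  intros Hs HL.
  assert (Hparts : is_RInt_gen
            (fun t => s * (Rpower t (s - 1) * exp (- t)) - Rpower t (s + 1 - 1) * exp (- t))
            (at_right 0) (Rbar_locally p_infty) (0 - 0)).
  { apply (is_RInt_gen_antiderivative _ (fun t => Rpower t s * exp (- t)));
      [| exact (filterlim_Rpower_exp_at_right_0 s Hs) | exact (filterlim_Rpower_exp_p_infty s Hs)].
    apply Filter_prod with (fun a => 0 < a) (fun b => 0 < b);
      [exists (mkposreal 1 Rlt_0_1); auto | exists 0; auto |].
    intros a b Ha Hb. simpl.
    apply (is_RInt_derive (fun t => Rpower t s * exp (- t))); intros x Hx;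
      assert (0 < x) by (apply Rlt_le_trans with (Rmin a b); [now apply Rmin_glb_lt | apply Hx]).
    - auto_derive; [solve_ex_derive_Rpower |].
      rewrite Derive_Rpower by lra. replace (s + 1 - 1) with s by ring. ring.
    - apply (ex_derive_continuous (V := R_NormedModule)). auto_derive. solve_ex_derive_Rpower. }
  pose proof (is_RInt_gen_minus _ _ _ _ (is_RInt_gen_scal _ s _ HL) Hparts) as H.
  replace (s * L) with (s * L - (0 - 0)) by ring.
  eapply is_RInt_gen_ext_R; [| exact H].
  intros x. unfold minus, plus, opp, scal; simpl; unfold mult; simpl. ring.
Qed.

Lemma Gamma_3_minus (alpha : R) : 0 < alpha < 1 ->
  0 < Gamma (1 - alpha) /\ Gamma (3 - alpha) = (1 - alpha) * (2 - alpha) * Gamma (1 - alpha).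
Proof.
  intros Ha. destruct (ex_Gamma_integral_pos (1 - alpha)) as [L [HL HLpos]]; [lra |].
  pose proof (is_RInt_gen_Gamma_succ (1 - alpha) L ltac:(lra) HL) as HL2.
  pose proof (is_RInt_gen_Gamma_succ (1 - alpha + 1) _ ltac:(lra) HL2) as HL3.
  unfold Gamma. replace (3 - alpha) with (1 - alpha + 1 + 1) by ring.
  rewrite (is_RInt_gen_unique _ _ HL), (is_RInt_gen_unique _ _ HL3). split; [lra | ring].
Qed.

Lemma is_RInt_gen_Rpower_at_left (beta a c : R) : 0 < beta -> a < c ->
  is_RInt_gen (fun s => Rpower (c - s) (beta - 1)) (at_point a) (at_left c)
    (Rpower (c - a) beta / beta).
Proof.
  intros Hb Hac.
  replace (Rpower (c - a) beta / beta) with (- (- / beta * Rpower (c - a) beta)) by (field; lra).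
  apply (is_RInt_gen_at_left_antiderivative _ (fun s => - / beta * Rpower (c - s) beta));
    [exact Hac | | | apply filterlim_mult_l_0, filterlim_Rpower_at_left; exact Hb].
  - intros x Hx. auto_derive; [solve_ex_derive_Rpower |].
    rewrite Derive_Rpower by lra. change (c + - x) with (c - x). field. lra.
  - intros x Hx. apply (ex_derive_continuous (V := R_NormedModule)).
    auto_derive. solve_ex_derive_Rpower.
Qed.

Lemma is_RInt_gen_moment_at_left (beta a c : R) : 0 < beta -> a < c ->
  is_RInt_gen (fun s => (s - (c + a) / 2) * Rpower (c - s) (beta - 1)) (at_point a) (at_left c)
    ((1 - beta) * Rpower (c - a) (beta + 1) / (2 * beta * (beta + 1))).
Proof.
  intros Hb Hac.
  assert (Hsucc : forall u, 0 < u -> Rpower u (beta + 1) = u * Rpower u beta)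
    by (intros u Hu; rewrite Rpower_plus, Rpower_1 by exact Hu; ring).
  replace ((1 - beta) * Rpower (c - a) (beta + 1) / (2 * beta * (beta + 1)))
    with (- (- (c - a) / (2 * beta) * Rpower (c - a) beta + / (beta + 1) * Rpower (c - a) (beta + 1)))
    by (rewrite Hsucc by lra; field; lra).
  apply (is_RInt_gen_at_left_antiderivative _ (fun s =>
    - (c - a) / (2 * beta) * Rpower (c - s) beta + / (beta + 1) * Rpower (c - s) (beta + 1)));
    [exact Hac | | |].
  - intros x Hx. auto_derive; [solve_ex_derive_Rpower |].
    rewrite !Derive_Rpower by lra. replace (beta + 1 - 1) with (beta - 1 + 1) by ring.
    rewrite Rpower_plus, Rpower_1 by lra. change (c + - x) with (c - x). field. lra.
  - intros x Hx. apply (ex_derive_continuous (V := R_NormedModule)).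
    auto_derive. solve_ex_derive_Rpower.
  - apply filterlim_plus_0; apply filterlim_mult_l_0, filterlim_Rpower_at_left; lra.
Qed.

Lemma a0_eq (alpha : R) (t : nat -> R) (n : nat) : 0 < alpha < 1 -> 0 < tau t n ->
  a0 alpha t n = (2 - alpha) / (Gamma (3 - alpha) * Rpower (tau t n) alpha).
Proof.
  intros Ha Ht. destruct (Gamma_3_minus alpha Ha) as [HG HG3].
  assert (Hb : 0 < 1 - alpha) by lra.
  assert (Hlt : t (n - 1)%nat < t n) by (unfold tau in Ht; lra).
  pose proof (is_RInt_gen_div_r _ (Gamma (1 - alpha)) _
    (is_RInt_gen_Rpower_at_left _ (t (n - 1)%nat) (t n) Hb Hlt)) as H.
  unfold a0, omega. rewrite (is_RInt_gen_unique _ _ H). fold (tau t n).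
  rewrite HG3, Rpower_1_minus by exact Ht.
  field. repeat split; try lra. apply Rgt_not_eq, Rpower_pos.
Qed.

Lemma eta0_eq (alpha : R) (t : nat -> R) (n : nat) : 0 < alpha < 1 -> 0 < tau t n ->
  eta0 alpha t n = alpha / (Gamma (3 - alpha) * Rpower (tau t n) alpha).
Proof.
  intros Ha Ht. destruct (Gamma_3_minus alpha Ha) as [HG HG3].
  assert (Hb : 0 < 1 - alpha) by lra.
  assert (Hlt : t (n - 1)%nat < t n) by (unfold tau in Ht; lra).
  pose proof (is_RInt_gen_div_r _ (tau t n * Gamma (1 - alpha)) _
    (is_RInt_gen_moment_at_left _ (t (n - 1)%nat) (t n) Hb Hlt)) as H.
  unfold eta0. erewrite is_RInt_gen_unique.
  2: { eapply is_RInt_gen_ext_R; [| exact H]. intros x. unfold omega. field. lra. }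
  fold (tau t n). rewrite HG3, Rpower_plus, Rpower_1_minus, Rpower_1 by exact Ht.
  field. repeat split; try lra. apply Rgt_not_eq, Rpower_pos.
Qed.

Lemma tau_pos (t : nat -> R) (k : nat) :
  (forall k, t k < t (S k)) -> (1 <= k)%nat -> 0 < tau t k.
Proof.
  intros Hinc Hk. unfold tau. destruct k as [| m]; [lia |].
  replace (S m - 1)%nat with m by lia. specialize (Hinc m). lra.
Qed.

Lemma Rpower_tau_pred (t : nat -> R) (n : nat) (a : R) : 0 < tau t n -> 0 < tau t (n - 1) ->
  Rpower (tau t (n - 1)) a = Rpower (tau t n) a / Rpower (ratio t n) a.
Proof.
  intros Hn Hp. unfold ratio. rewrite Rpower_div by assumption.
  field. split; apply Rgt_not_eq, Rpower_pos.
Qed.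

Lemma JB2_bound_closed_form (alpha r rs Rs rho T G x y : R) :
  0 < alpha < 1 -> 0 < r -> 0 < rs -> 0 < rho -> 0 < T -> 0 < G ->
  x * ((1 / (2 - alpha) * ((2 - alpha) / (G * T)) + r * (alpha / (G * T)) / (1 + r)) * x
       - r ^ 2 * (alpha / (G * T)) / (1 + r) * y) >=
  alpha * Rs / (2 * (1 + rs) * T) * x ^ 2 / G
  - alpha * (r ^ 2 / rho) / (2 * (1 + r) * (T / rho ^ 2)) * y ^ 2 / G
  + ((2 + 2 * (1 + alpha) * r - alpha * (r ^ 2 / rho)) / (1 + r) - alpha * Rs / (1 + rs))
      / (2 * G * T) * x ^ 2.
Proof.
  intros Ha Hr Hrs Hrho HT HG.
  match goal with |- ?lhs >= ?rhs =>
    assert (Hsq : lhs - rhs = alpha * r ^ 2 * (x - rho * y) ^ 2 / (2 * (1 + r) * G * T * rho))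
      by (field; lra) end.
  enough (0 <= alpha * r ^ 2 * (x - rho * y) ^ 2 / (2 * (1 + r) * G * T * rho)) by lra.
  apply Rmult_le_pos; [| apply Rlt_le, Rinv_0_lt_compat; repeat apply Rmult_lt_0_compat; lra].
  apply Rmult_le_pos; [| apply pow2_ge_0]. apply Rmult_le_pos; [lra | apply pow2_ge_0].
Qed.

Theorem lemma2p2 (alpha : R) (t : nat -> R) (v : nat -> R) (n : nat) :
  0 < alpha < 1 ->
  t 0%nat = 0 ->
  (forall k : nat, t k < t (S k)) ->
  (forall k : nat, (2 <= k)%nat -> ratio t k < rstar alpha) ->
  (2 <= n)%nat ->
  nabla v n * JB2 alpha t v n >=
    alpha * Rpower (ratio t (S n)) (2 - alpha / 2)
      / (2 * (1 + ratio t (S n)) * Rpower (tau t n) alpha)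
      * (nabla v n) ^ 2 / Gamma (3 - alpha)
  - alpha * Rpower (ratio t n) (2 - alpha / 2)
      / (2 * (1 + ratio t n) * Rpower (tau t (n - 1)%nat) alpha)
      * (nabla v (n - 1)%nat) ^ 2 / Gamma (3 - alpha)
  + gfun (ratio t n) (ratio t (S n)) alpha
      / (2 * Gamma (3 - alpha) * Rpower (tau t n) alpha) * (nabla v n) ^ 2.
Proof.
  intros Ha _ Hinc _ Hn.
  assert (Htn : 0 < tau t n) by (apply tau_pos; [exact Hinc | lia]).
  assert (Htp : 0 < tau t (n - 1)) by (apply tau_pos; [exact Hinc | lia]).
  assert (Hts : 0 < tau t (S n)) by (apply tau_pos; [exact Hinc | lia]).
  assert (Hr : 0 < ratio t n) by (apply Rdiv_lt_0_compat; assumption).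
  assert (Hrs : 0 < ratio t (S n)).
  { unfold ratio. replace (S n - 1)%nat with n by lia. apply Rdiv_lt_0_compat; assumption. }
  assert (HG : 0 < Gamma (3 - alpha)).
  { destruct (Gamma_3_minus alpha Ha) as [HG1 ->]. repeat apply Rmult_lt_0_compat; lra. }
  unfold JB2, gfun.
  rewrite a0_eq, eta0_eq, (Rpower_tau_pred t n alpha), (Rpower_half_sqr (ratio t n) alpha),
    (Rpower_2_minus (ratio t n)) by assumption.
  apply JB2_bound_closed_form; try apply Rpower_pos; assumption.
Qed.
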